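(* Let $1\le r<\infty$, $d\in\mathbb{N}$, $\varepsilon>0$. Let $a=\lceil(8/\varepsilon+3)^r\rceil$ and $M=\{a^{j-1}: j\in\mathbb{N}\}$. Let $\bar m,\bar n\in[M]^d$ with $m_1<n_1<\dots<m_d<n_d$ and let $k>n_d$. Let $F\colon S_{\ell_\infty^k}\to S_{\ell_r^k}$ be a support preserving and step preserving map. Then \[\|F(z(\bar m))-F(z(\bar n))\|_r>1-\varepsilon.\]
   Context: $S_{\ell_p^k}$ is the unit sphere of $(\mathbb{R}^k,\|\cdot\|_p)$. $[M]^d$ is the set of increasing $d$-tuples from $M$. For $\bar m\in[\mathbb{N}]^d$ with $m_0=0$, $z(\bar m)=\sum_{s=1}^d(1-\frac{s-1}{d})1_{(m_{s-1},m_s]}$, viewed in $S_{\ell_\infty^k}$ for $k\ge m_d$, where $1_{(a,b]}$ is the indicator vector of $\{i:a<i\le b\}$. $\mathrm{supp}(x)=\{i:x_i\ne0\}$; $F$ is support preserving if $\mathrm{supp}(F(x))=\mathrm{supp}(x)$ for all $x$; $F=(F_i)$ is step preserving if $x_i=x_j$ implies $F_i(x)=F_j(x)$. *)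

From HB Require Import structures.
From mathcomp Require Import all_boot all_order all_algebra.
From mathcomp Require Import all_classical all_reals.
From mathcomp Require Import exp.
Set Implicit Arguments. Unset Strict Implicit. Unset Printing Implicit Defensive.
Import Order.TTheory GRing.Theory Num.Theory.
Local Open Scope ring_scope.

(* Vectors of R^k are functions 'I_k -> R; coordinate i : 'I_k stands for
   the paper's coordinate i+1 (paper indexes coordinates 1..k). *)

Definition supnorm {R : realType} {k : nat} (x : 'I_k -> R) : R :=
  \big[Num.max/0]_(i < k) `|x i|.

Definition lpnorm {R : realType} (p : R) {k : nat} (x : 'I_k -> R) : R :=
  (\sum_(i < k) `|x i| `^ p) `^ p^-1.

Definition supp {R : realType} {k : nat} (x : 'I_k -> R) : {set 'I_k} :=
  [set i | x i != 0].

(* The d-tuple m_1 < ... < m_d is given as m : nat -> nat, read at s = 1..d;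
   the convention m_0 = 0 is built in via [mprev]. *)
Definition mprev (m : nat -> nat) (s : nat) : nat :=
  if s == 1%N then 0%N else m s.-1.

Definition zvec {R : realType} (d : nat) (m : nat -> nat) (k : nat) : 'I_k -> R :=
  fun i => \sum_(1 <= s < d.+1)
             (1 - (s.-1)%:R / d%:R) * ((mprev m s < i.+1 <= m s)%N)%:R.

From HB Require Import structures.
From mathcomp Require Import all_boot all_order all_algebra.
From mathcomp Require Import all_classical all_reals.
From mathcomp Require Import interval_inference exp convex hoelder.
From mathcomp Require Import zify lra.
Import Order.TTheory GRing.Theory Num.Theory.
Local Open Scope ring_scope.

(* Let u = F(z(m)) and v = F(z(n)).  Since F preserves steps and supports, u is
   constant on each block (m_{s-1}, m_s] of z(m) and vanishes beyond m_d, and v is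
   constant on each block (n_{s-1}, n_s] of z(n).  Because n_{s-1} <= m_s / a and
   m_s <= n_s / a, the windows (n_{s-1}, m_s] carry at least 1 - 1/a of the mass
   of |u|^r and at most 1/a of the mass of |v|^r.  Convexity of t |-> t^r gives
   |u_i|^r <= lam^(1-r) |u_i - v_i|^r + (1-lam)^(1-r) |v_i|^r; summing over the
   windows with lam = 1 - 1/b, b = 8/eps + 3 and a >= b^r yields
   ||u - v||_r >= (1 - 1/b)(1 - 2/b) > 1 - eps. *)

Lemma ler_sum_subrange (R : numDomainType) (F : nat -> R) (lo hi lo' hi' : nat) :
  (forall i, 0 <= F i) -> (lo <= lo')%N -> (hi' <= hi)%N ->
  \sum_(lo' <= i < hi') F i <= \sum_(lo <= i < hi) F i.
Proof.
move=> F_ge0 lo_le hi_le; have [hi'_le|lo'_lt] := leqP hi' lo'.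
  by rewrite big_geq // sumr_ge0.
rewrite (big_cat_nat lo_le (_ : lo' <= hi)%N) /=; last by lia.
rewrite (big_cat_nat (ltnW lo'_lt) hi_le) /=.
rewrite -[leLHS]add0r -[leLHS]addr0 addrA.
by rewrite lerD ?lerD ?sumr_ge0.
Qed.

Lemma sum_nat_const_on {R : pzRingType} {F : nat -> R} {c : R} {lo hi lo' hi' : nat} :
  (forall i, (lo <= i < hi)%N -> F i = c) -> (lo <= lo')%N -> (hi' <= hi)%N ->
  \sum_(lo' <= i < hi') F i = (hi' - lo')%:R * c.
Proof.
move=> F_c lo_le hi_le; rewrite mulr_natl -sumr_const_nat.
by apply: eq_big_nat => i i_in; apply: F_c; lia.
Qed.

Lemma mprevS (p : nat -> nat) (t : nat) : (0 < t)%N -> mprev p t.+1 = p t.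
Proof. by case: t. Qed.

Lemma sum_mprev_blocks (V : nmodType) (p : nat -> nat) (t : nat) (F : nat -> V) :
  (forall s, (0 < s <= t)%N -> (mprev p s <= p s)%N) ->
  \sum_(0 <= i < mprev p t.+1) F i = \sum_(1 <= s < t.+1) \sum_(mprev p s <= i < p s) F i.
Proof.
elim: t => [|t IH] p_chain; first by rewrite !big_geq.
rewrite big_nat_recr //= -IH => [|s s_in]; last by apply: p_chain; lia.
by rewrite mprevS // -big_cat_nat // p_chain //=.
Qed.

Lemma le_mul_of_powers (R : realDomainType) (a : R) (x y : nat) : 1 < a ->
  (exists j, x%:R = a ^+ j) -> (exists j, y%:R = a ^+ j) -> (x < y)%N -> a * x%:R <= y%:R.
Proof.
move=> a_gt1 [j xE] [l yE] x_lt_y.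
have : a ^+ j < a ^+ l by rewrite -xE -yE ltr_nat.
by rewrite ltr_eXn2l // xE yE -exprS ler_eXn2l.
Qed.

Lemma powR_normD_le (R : realType) (r lam x y : R) : 1 <= r -> 0 < lam < 1 ->
  `|x + y| `^ r <= lam `^ (1 - r) * `|x| `^ r + (1 - lam) `^ (1 - r) * `|y| `^ r.
Proof.
move=> r_ge1 /andP[lam_gt0 lam_lt1].
have r_ge0 : 0 <= r by apply: le_trans r_ge1.
have rescale (t c : R) : 0 < t -> 0 <= c -> t * (c / t) `^ r = t `^ (1 - r) * c `^ r.
  move=> t_gt0 c_ge0; have t_ge0 := ltW t_gt0.
  rewrite powRM ?invr_ge0 // -(powR_inv1 t_ge0) -powRrM mulN1r mulrCA -{1}(powRr1 t_ge0).
  by rewrite -powRD ?(gt_eqF t_gt0) ?implybT // mulrC.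
have lam'_gt0 : 0 < 1 - lam by rewrite subr_gt0.
have split_xy : `|x| + `|y| = lam * (`|x| / lam) + (1 - lam) * (`|y| / (1 - lam)).
  by rewrite ![_ * (_ / _)]mulrC !divfK ?gt_eqF.
apply: (@le_trans _ _ ((`|x| + `|y|) `^ r)).
  by apply: ge0_ler_powR; rewrite ?nnegrE ?addr_ge0 ?ler_normD.
have nonneg (c t : R) : 0 < t -> `|c| / t \in `[0, +oo[%classic.
  by move=> t_gt0; rewrite inE /= in_itv /= andbT divr_ge0 // ltW.
have conv_ineq := convex_powR r_ge1 (Itv01 (ltW lam_gt0) (ltW lam_lt1))
  (nonneg x lam lam_gt0) (nonneg y _ lam'_gt0).
rewrite convRE [X in X `^ _ <= _]convRE /= in conv_ineq.
by rewrite split_xy -!rescale.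
Qed.

Definition zext {V : nmodType} {k : nat} (x : 'I_k -> V) (i : nat) : V :=
  if insub i is Some j then x j else 0.

Lemma zext_ord (V : nmodType) (k : nat) (x : 'I_k -> V) (i : 'I_k) : zext x i = x i.
Proof. by rewrite /zext valK. Qed.

Lemma zextB (V : zmodType) (k : nat) (x y : 'I_k -> V) (i : nat) :
  zext (fun j => x j - y j) i = zext x i - zext y i.
Proof. by rewrite /zext; case: insub; rewrite ?subr0. Qed.

Lemma sum_zext (V W : nmodType) (k : nat) (x : 'I_k -> V) (G : V -> W) :
  \sum_(i < k) G (x i) = \sum_(0 <= i < k) G (zext x i).
Proof. by rewrite big_mkord; apply: eq_bigr => i _; rewrite zext_ord. Qed.

Lemma lpnorm_powR (R : realType) (r : R) (k : nat) (x : 'I_k -> R) : r != 0 ->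
  lpnorm r x `^ r = \sum_(i < k) `|x i| `^ r.
Proof.
move=> r_neq0; rewrite /lpnorm -powRrM mulVf // powRr1 //.
by apply: sumr_ge0 => i _; apply: powR_ge0.
Qed.

Section StepVector.
Context {R : realType} {d k : nat} {p : nat -> nat}.
Hypothesis p_chain : forall s, (0 < s <= d)%N -> (mprev p s < p s)%N.
Hypothesis d_gt0 : (0 < d)%N.

Lemma chain_le s t : (0 < s)%N -> (s <= t <= d)%N -> (p s <= p t)%N.
Proof.
move=> s_gt0; elim: t => [|t IH] /andP[s_le t_le]; first by lia.
have [->//|s_ne] := eqVneq s t.+1.
have := p_chain t.+1; rewrite mprevS; [have := IH|]; lia.
Qed.

Lemma chain_le_mprev s t : (0 < s < t)%N -> (t <= d)%N -> (p s <= mprev p t)%N.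
Proof.
move=> s_in t_le; case: t s_in t_le => [|t] s_in t_le; first by lia.
rewrite mprevS; [apply: chain_le|]; lia.
Qed.

Lemma block_uniq s t (i : nat) : (0 < s <= d)%N -> (0 < t <= d)%N ->
  (mprev p s <= i < p s)%N -> (mprev p t <= i < p t)%N -> s = t.
Proof.
wlog st : s t / (s <= t)%N => [hwlog|] s_in t_in i_s i_t.
  by have [/hwlog->|/ltnW/hwlog->] := leqP s t.
have [//|s_lt] := eqVneq s t.
have := @chain_le_mprev s t; lia.
Qed.

Lemma block_exists (i : nat) : (i < p d)%N ->
  exists2 s, (0 < s <= d)%N & (mprev p s <= i < p s)%N.
Proof.
move=> i_lt; have ex : exists s, (0 < s <= d)%N && (i < p s)%N.
  by exists d; rewrite d_gt0 leqnn.
case: (ex_minnP ex) => s /andP[s_in i_lt_s] s_min; exists s => //.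
rewrite i_lt_s andbT /mprev; case: eqP => // s_neq1.
rewrite leqNgt; apply/negP => i_lt'.
have /s_min : (0 < s.-1 <= d)%N && (i < p s.-1)%N by apply/andP; split; lia.
lia.
Qed.

Local Notation z := (@zvec R d p k).

Lemma zvec_block (i : 'I_k) s : (0 < s <= d)%N -> (mprev p s <= i < p s)%N ->
  z i = 1 - s.-1%:R / d%:R.
Proof.
move=> s_in i_in; rewrite /zvec (bigD1_seq s) ?mem_index_iota ?iota_uniq //=.
rewrite ltnS i_in mulr1 big_seq_cond big1 ?addr0 // => t /andP[].
rewrite mem_index_iota => t_in t_ne.
suff -> : (mprev p t < i.+1 <= p t)%N = false by rewrite mulr0.
apply/negbTE; apply: contra t_ne; rewrite ltnS => i_t.
by rewrite (@block_uniq t s i) //; lia.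
Qed.

Lemma zvec_tail (i : 'I_k) : (p d <= i)%N -> z i = 0.
Proof.
move=> i_ge; rewrite /zvec big_nat big1 // => t t_in.
suff -> : (i < p t)%N = false by rewrite andbF mulr0.
have := @chain_le t d; lia.
Qed.

Hypothesis pd_le_k : (p d <= k)%N.

Lemma supnorm_zvec : supnorm z = 1.
Proof.
have d_pos : (0 < d%:R :> R) by rewrite ltr0n.
apply/eqP; rewrite eq_le; apply/andP; split.
  rewrite /supnorm; apply: bigmax_le => // i _.
  have [/block_exists[s s_in i_in]|i_ge] := ltnP i (p d); last by rewrite zvec_tail ?normr0.
  rewrite (@zvec_block i s s_in i_in) ger0_norm ?gerBl ?divr_ge0 //.
  by rewrite subr_ge0 ler_pdivrMr // mul1r ler_nat; lia.
have k_gt0 : (0 < k)%N by have := p_chain 1; have := @chain_le 1 d; lia.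
rewrite /supnorm (le_trans _ (le_bigmax _ _ (Ordinal k_gt0))) //.
by rewrite (@zvec_block _ 1) ?mul0r ?subr0 ?normr1 //=; exact: (p_chain 1).
Qed.

Context {F : ('I_k -> R) -> ('I_k -> R)}.
Hypothesis F_step :
  forall x, supnorm x = 1 -> forall i j : 'I_k, x i = x j -> F x i = F x j.
Hypothesis F_supp : forall x, supnorm x = 1 -> supp (F x) = supp x.

Lemma F_zvec_block s (i : nat) : (0 < s <= d)%N -> (mprev p s <= i < p s)%N ->
  zext (F z) i = zext (F z) (mprev p s).
Proof.
move=> s_in i_in.
have [i_lt j_lt] : (i < k)%N /\ (mprev p s < k)%N by have := @chain_le s d; lia.
rewrite -[i]/(nat_of_ord (Ordinal i_lt)) -[mprev p s]/(nat_of_ord (Ordinal j_lt)) !zext_ord.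
apply: F_step; first exact: supnorm_zvec.
rewrite !(@zvec_block _ s) //= leqnn; lia.
Qed.

Lemma F_zvec_tail (i : nat) : (p d <= i)%N -> zext (F z) i = 0.
Proof.
move=> i_ge; have [i_lt|i_ge_k] := ltnP i k; last by rewrite /zext insubF // ltnNge i_ge_k.
rewrite -[i]/(nat_of_ord (Ordinal i_lt)) zext_ord.
have := congr1 (fun S : {set 'I_k} => Ordinal i_lt \in S) (F_supp _ supnorm_zvec).
by rewrite /supp !inE zvec_tail //= eqxx => /negbT; rewrite negbK => /eqP.
Qed.

End StepVector.

Definition lacunary_interleaved {R : numDomainType} (a : R) (d : nat) (m n : nat -> nat) :=
  forall s, (0 < s <= d)%N -> [/\ (mprev n s < m s < n s)%N,
    a * (mprev n s)%:R <= (m s)%:R & a * (m s)%:R <= (n s)%:R].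

Lemma lacunary_interleaved_powers {R : realDomainType} {a : R} {d : nat} {m n : nat -> nat} :
  1 < a ->
  (forall s, (1 <= s <= d)%N -> exists j : nat, (m s)%:R = a ^+ j) ->
  (forall s, (1 <= s <= d)%N -> exists j : nat, (n s)%:R = a ^+ j) ->
  (forall s, (1 <= s <= d)%N -> (m s < n s)%N) ->
  (forall s, (1 <= s < d)%N -> (n s < m s.+1)%N) ->
  lacunary_interleaved a d m n.
Proof.
move=> a_gt1 m_pow n_pow m_lt_n n_lt_m s s_in.
have gap_hi : a * (m s)%:R <= (n s)%:R.
  by apply: le_mul_of_powers; [|apply: m_pow|apply: n_pow|apply: m_lt_n].
case: s s_in gap_hi => [//|[|s]] s_in gap_hi; rewrite /mprev /=.
  have [j m1E] := m_pow 1%N s_in.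
  have m1_gt0 : (0 < m 1)%N by rewrite -(ltr_nat R) m1E exprn_gt0 // (lt_trans ltr01).
  by rewrite mulr0 m1_gt0 m_lt_n.
have n_lt_m' : (n s.+1 < m s.+2)%N by apply: n_lt_m; lia.
split => //; first by rewrite n_lt_m' m_lt_n.
by apply: le_mul_of_powers; [|apply: n_pow; lia|apply: m_pow|].
Qed.

Section Interleaved.
Context {R : realType} {r a : R} {d k : nat} {m n : nat -> nat}.
Hypotheses (r_ge1 : 1 <= r) (a_ge1 : 1 <= a) (d_gt0 : (0 < d)%N).
Hypothesis mn_interleaved : lacunary_interleaved a d m n.
Hypothesis nd_le_k : (n d <= k)%N.

Let r_neq0 : r != 0 := lt0r_neq0 (lt_le_trans ltr01 r_ge1).

Lemma mprev_le s : (0 < s <= d)%N -> (mprev m s <= mprev n s)%N.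
Proof.
case: s => [//|[//|s]] s_in; rewrite !mprevS //.
by have /mn_interleaved[/andP[_ /ltnW]] : (0 < s.+1 <= d)%N by lia.
Qed.

Lemma chain_m s : (0 < s <= d)%N -> (mprev m s < m s)%N.
Proof.
move=> s_in; have := @mprev_le s s_in.
by have [/andP[? _] _ _] := mn_interleaved _ s_in; lia.
Qed.

Lemma chain_n s : (0 < s <= d)%N -> (mprev n s < n s)%N.
Proof. by move=> s_in; have [/andP[? ?] _ _] := mn_interleaved _ s_in; lia. Qed.

Lemma md_le_k : (m d <= k)%N.
Proof.
have /mn_interleaved[/andP[_ /ltnW md_le_nd] _ _] : (0 < d <= d)%N by rewrite d_gt0 /=.
exact: leq_trans md_le_nd nd_le_k.
Qed.

(* 0-based [n_{s-1}, m_s) is the paper's window (n_{s-1}, m_s]. *)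
Definition window_mass (g : nat -> R) : R :=
  \sum_(1 <= s < d.+1) \sum_(mprev n s <= i < m s) g i.

Lemma window_mass_le (g : nat -> R) : (forall i, 0 <= g i) ->
  window_mass g <= \sum_(0 <= i < k) g i.
Proof.
move=> g_ge0; apply: (@le_trans _ _ (\sum_(0 <= i < n d) g i)).
  rewrite -(@mprevS n d d_gt0) sum_mprev_blocks => [|s s_in]; last exact/ltnW/chain_n.
  apply: ler_sum_nat => s s_in; apply: ler_sum_subrange => //.
  by have /mn_interleaved[/andP[_ /ltnW]] : (0 < s <= d)%N by lia.
exact: ler_sum_subrange.
Qed.

Lemma window_mass_split (x y : 'I_k -> R) (lam : R) : 0 < lam < 1 ->
  window_mass (fun i => `|zext x i| `^ r) <=
  lam `^ (1 - r) * window_mass (fun i => `|zext x i - zext y i| `^ r) +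
  (1 - lam) `^ (1 - r) * window_mass (fun i => `|zext y i| `^ r).
Proof.
move=> lam_in; rewrite /window_mass !mulr_sumr -big_split; apply: ler_sum_nat => s _.
rewrite !mulr_sumr -big_split; apply: ler_sum_nat => i _ /=.
by rewrite -{1}(subrK (zext y i) (zext x i)) powR_normD_le.
Qed.

Context {F : ('I_k -> R) -> ('I_k -> R)}.
Hypothesis F_sphere : forall x, supnorm x = 1 -> lpnorm r (F x) = 1.
Hypothesis F_supp : forall x, supnorm x = 1 -> supp (F x) = supp x.
Hypothesis F_step :
  forall x, supnorm x = 1 -> forall i j : 'I_k, x i = x j -> F x i = F x j.

Lemma sum_zext_sphere x : supnorm x = 1 -> \sum_(0 <= i < k) `|zext (F x) i| `^ r = 1.
Proof.
move=> x_sphere.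
by rewrite -(@sum_zext _ _ _ (F x) (fun y => `|y| `^ r)) -lpnorm_powR // F_sphere // powR1.
Qed.

Local Notation u := (F (@zvec R d m k)).
Local Notation v := (F (@zvec R d n k)).

Lemma window_mass_u : 1 - a^-1 <= window_mass (fun i => `|zext u i| `^ r).
Proof.
set g := fun i => `|zext u i| `^ r.
have g_ge0 i : 0 <= g i by apply: powR_ge0.
have total : \sum_(1 <= s < d.+1) \sum_(mprev m s <= i < m s) g i = 1.
  rewrite -sum_mprev_blocks => [|s s_in]; last exact/ltnW/chain_m.
  rewrite (@mprevS m d d_gt0) -(sum_zext_sphere _ (supnorm_zvec chain_m d_gt0 md_le_k)).
  have tail : \sum_(m d <= i < k) g i = 0.
    rewrite big_nat big1 // => i /andP[i_ge _].
    by rewrite /g (F_zvec_tail chain_m d_gt0 md_le_k F_supp) // normr0 powR0.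
  by rewrite (big_cat_nat (leq0n _) md_le_k) /= tail addr0.
rewrite -[leLHS]mulr1 -{2}total mulr_sumr; apply: ler_sum_nat => s /= s_in.
have {}s_in : (0 < s <= d)%N by lia.
have [/andP[n_lt_m m_lt_n] gap_lo _] := mn_interleaved _ s_in.
have g_const i : (mprev m s <= i < m s)%N -> g i = g (mprev m s).
  by move=> i_in; rewrite /g (F_zvec_block chain_m d_gt0 md_le_k F_step _ _ s_in i_in).
rewrite !(sum_nat_const_on g_const) ?leqnn ?mprev_le // mulrA ler_wpM2r //.
rewrite !natrB ?(ltnW n_lt_m) ?(ltnW (chain_m _ s_in)) //.
have a_gt0 : 0 < a by apply: lt_le_trans a_ge1.
have gap_lo' : (mprev n s)%:R <= a^-1 * (m s)%:R by rewrite ler_pdivlMl.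
have a_inv_le1 : a^-1 <= 1 by rewrite invf_le1.
have : 0 <= (1 - a^-1) * (mprev m s)%:R by rewrite mulr_ge0 ?subr_ge0.
lra.
Qed.

Lemma window_mass_v : window_mass (fun i => `|zext v i| `^ r) <= a^-1.
Proof.
set g := fun i => `|zext v i| `^ r.
have g_ge0 i : 0 <= g i by apply: powR_ge0.
have a_gt0 : 0 < a by apply: lt_le_trans a_ge1.
have total : \sum_(1 <= s < d.+1) \sum_(mprev n s <= i < n s) g i <= 1.
  rewrite -sum_mprev_blocks => [|s s_in]; last exact/ltnW/chain_n.
  rewrite (@mprevS n d d_gt0) -(sum_zext_sphere _ (supnorm_zvec chain_n d_gt0 nd_le_k)).
  exact: ler_sum_subrange.
apply: (@le_trans _ _ (a^-1 * \sum_(1 <= s < d.+1) \sum_(mprev n s <= i < n s) g i)).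
  rewrite mulr_sumr; apply: ler_sum_nat => s /= s_in.
  have {}s_in : (0 < s <= d)%N by lia.
  have [/andP[n_lt_m m_lt_n] _ gap_hi] := mn_interleaved _ s_in.
  have g_const i : (mprev n s <= i < n s)%N -> g i = g (mprev n s).
    by move=> i_in; rewrite /g (F_zvec_block chain_n d_gt0 nd_le_k F_step _ _ s_in i_in).
  rewrite !(sum_nat_const_on g_const) ?leqnn ?(ltnW m_lt_n) // mulrA ler_wpM2r //.
  rewrite !natrB ?(ltnW n_lt_m) ?(ltnW (chain_n _ s_in)) // ler_pdivlMl //.
  have : (mprev n s)%:R <= a * (mprev n s)%:R :> R by rewrite ler_peMl.
  lra.
by rewrite -[leRHS]mulr1 ler_pM2l ?invr_gt0.
Qed.

Lemma lpnorm_sub_interleaved (lam : R) : 0 < lam < 1 ->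
  1 - a^-1 <=
  lam `^ (1 - r) * lpnorm r (fun i => u i - v i) `^ r + (1 - lam) `^ (1 - r) * a^-1.
Proof.
move=> lam_in; apply: le_trans window_mass_u _.
apply: le_trans (window_mass_split u v lam lam_in) _.
apply: lerD; apply: ler_wpM2l; rewrite ?powR_ge0 //; last exact: window_mass_v.
rewrite lpnorm_powR // (@sum_zext _ _ _ _ (fun y => `|y| `^ r)).
under [X in _ <= X]eq_bigr do rewrite zextB.
by apply: window_mass_le => i; apply: powR_ge0.
Qed.

End Interleaved.

Lemma ler_mul_of_powR_weighted {R : realType} {r lam c N : R} :
  1 <= r -> 0 < lam <= 1 -> 0 < c <= 1 -> 0 <= N ->
  c <= lam `^ (1 - r) * N `^ r -> lam * c <= N.
Proof.
move=> r_ge1 lam_in c_in N_ge0 c_le.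
have [[lam_gt0 _] [c_gt0 _]] := (andP lam_in, andP c_in).
have r_gt0 : 0 < r by apply: lt_le_trans r_ge1.
have powr_le : (lam * c) `^ r <= N `^ r.
  rewrite (powRM _ (ltW lam_gt0) (ltW c_gt0)).
  apply: (@le_trans _ _ (lam `^ (r - 1) * c)).
    by apply: ler_pM; rewrite ?powR_ge0 ?ger_powR ?ge1r_powR ?gerBl.
  have -> : N `^ r = lam `^ (r - 1) * (lam `^ (1 - r) * N `^ r).
    rewrite mulrA -powRD ?(lt0r_neq0 lam_gt0) ?implybT //.
    by rewrite (_ : r - 1 + (1 - r) = 0) ?powRr0 ?mul1r //; lra.
  by rewrite ler_wpM2l ?powR_ge0.
rewrite leNgt; apply/negP => /(gt0_ltr_powR r_gt0 _ _).
rewrite !nnegrE N_ge0 (mulr_ge0 (ltW lam_gt0) (ltW c_gt0)) => /(_ isT isT).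
by rewrite ltNge powr_le.
Qed.

Lemma lacunary_numeric_bound {R : realType} {r eps a N : R} :
  1 <= r -> 0 < eps -> (8 / eps + 3) `^ r <= a -> 0 <= N ->
  (forall lam, 0 < lam < 1 ->
     1 - a^-1 <= lam `^ (1 - r) * N `^ r + (1 - lam) `^ (1 - r) * a^-1) ->
  1 - eps < N.
Proof.
move=> r_ge1 eps_gt0 a_ge N_ge0 split_bound.
set b := 8 / eps + 3 in a_ge.
have b_gt3 : 3 < b by rewrite ltrDr divr_gt0.
have b_gt0 : 0 < b by apply: lt_trans b_gt3.
set x := b^-1.
have x_gt0 : 0 < x by rewrite invr_gt0.
have x_lt : 3 * x < 1 by rewrite /x ltr_pdivrMr // mul1r.
have eps_ge : 8 * x <= eps.
  have : eps = (8 + 3 * eps) * x.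
    rewrite -[LHS](mulfK (lt0r_neq0 b_gt0)) /b mulrDr mulrCA mulfV ?gt_eqF //.
    by rewrite mulr1 (mulrC eps).
  nra.
have a_inv_le : a^-1 <= x `^ r.
  have br_gt0 : 0 < b `^ r by apply: powR_gt0.
  rewrite /x -(powR_inv1 (ltW b_gt0)) powRAC (powR_inv1 (powR_ge0 _ _)).
  by rewrite lef_pV2 ?posrE // (lt_le_trans br_gt0).
have xr_le : x `^ r <= x by apply: ge1r_powR => //; rewrite x_gt0; lra.
have x_term : x `^ (1 - r) * a^-1 <= x.
  apply: (@le_trans _ _ (x `^ (1 - r) * x `^ r)); first by rewrite ler_wpM2l ?powR_ge0.
  by rewrite -powRD ?(lt0r_neq0 x_gt0) ?implybT // subrK powRr1 // ltW.
have lam_in : 0 < 1 - x < 1 by apply/andP; split; lra.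
have : (1 - x) * (1 - 2 * x) <= N.
  apply: (ler_mul_of_powR_weighted r_ge1) => //; try (apply/andP; split; lra).
  have lamC : 1 - (1 - x) = x by lra.
  by have := split_bound _ lam_in; rewrite lamC; lra.
nra.
Qed.

Theorem lemma4p1 (R : realType) (r : R) (d : nat) (eps : R)
  (m n : nat -> nat) (k : nat)
  (F : ('I_k -> R) -> ('I_k -> R)) :
  1 <= r -> (1 <= d)%N -> 0 < eps ->
  (* m_s, n_s belong to M = {a^(j-1) : j >= 1}, a = ceil((8/eps+3)^r) *)
  (forall s, (1 <= s <= d)%N ->
     exists j : nat, (m s)%:R = ((Num.ceil ((8 / eps + 3) `^ r))%:~R : R) ^+ j) ->
  (forall s, (1 <= s <= d)%N ->
     exists j : nat, (n s)%:R = ((Num.ceil ((8 / eps + 3) `^ r))%:~R : R) ^+ j) ->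
  (* m_1 < n_1 < m_2 < ... < m_d < n_d *)
  (forall s, (1 <= s <= d)%N -> (m s < n s)%N) ->
  (forall s, (1 <= s < d)%N -> (n s < m s.+1)%N) ->
  (n d < k)%N ->
  (* F : S_{l_inf^k} -> S_{l_r^k} *)
  (forall x : 'I_k -> R, supnorm x = 1 -> lpnorm r (F x) = 1) ->
  (* support preserving *)
  (forall x : 'I_k -> R, supnorm x = 1 -> supp (F x) = supp x) ->
  (* step preserving *)
  (forall x : 'I_k -> R, supnorm x = 1 -> forall i j : 'I_k, x i = x j -> F x i = F x j) ->
  1 - eps < lpnorm r (fun i => F (@zvec R d m k) i - F (@zvec R d n k) i).
Proof.
move=> r_ge1 d_gt0 eps_gt0 m_pow n_pow m_lt_n n_lt_m nd_lt_k F_sphere F_supp F_step.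
set a := (Num.ceil _)%:~R in m_pow n_pow.
have a_ge : (8 / eps + 3) `^ r <= a by apply: ceil_ge.
have eps8_gt0 : 0 < 8 / eps by rewrite divr_gt0.
have b_gt1 : 1 < 8 / eps + 3 by lra.
have a_gt1 : 1 < a by apply: lt_le_trans b_gt1 (le_trans (le1r_powR (ltW b_gt1) r_ge1) a_ge).
have mn_interleaved := lacunary_interleaved_powers a_gt1 m_pow n_pow m_lt_n n_lt_m.
apply: (lacunary_numeric_bound r_ge1 eps_gt0 a_ge); first exact: powR_ge0.
exact: (lpnorm_sub_interleaved r_ge1 (ltW a_gt1) d_gt0 mn_interleaved (ltnW nd_lt_k)
  F_sphere F_supp F_step).
Qed.
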